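(* For all positive integers $n$ and $k$ with $k\equiv1\pmod 3$, $$\det\big(M_{n+i+j}^{(k)}\big)_{0\le i,j\le k-1}=(-1)^{n\lfloor (k+1)/3\rfloor}\Big(\frac{2k+4}{3}\Big)^{n-1}.$$
   Context: $M_N^{(k)}$ is the number of lattice paths from $(0,0)$ to $(N,0)$ with steps $(1,1)$, $(1,0)$, $(1,-1)$ that never go below the $x$-axis and never go above the line $y=k$ (bounded Motzkin paths). *)

From mathcomp Require Import all_boot all_order all_algebra.
Set Implicit Arguments. Unset Strict Implicit. Unset Printing Implicit Defensive.
Import Order.TTheory GRing.Theory Num.Theory.
Local Open Scope ring_scope.

(* A step is encoded by s : 'I_3, with s = 0,1,2 meaning (1,-1),(1,0),(1,1). *)
Definition step_dy (s : 'I_3) : int := (nat_of_ord s)%:Z - 1.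

Definition heights (ss : seq 'I_3) : seq int :=
  scanl (fun y s => y + step_dy s) 0 ss.

Definition bounded_motzkin (k : nat) (ss : seq 'I_3) : bool :=
  (foldl (fun y s => y + step_dy s) 0 ss == 0) &&
  all (fun y => (0 <= y) && (y <= k%:Z)) (heights ss).

Definition motzkin_bounded (k N : nat) : nat :=
  #|[set t : N.-tuple 'I_3 | bounded_motzkin k t]|.

From mathcomp Require Import all_boot all_order all_algebra zify ring.
Unset Printing Implicit Defensive.
Import Order.TTheory GRing.Theory Num.Theory.
Local Open Scope ring_scope.

(* Let A be the (k+1)x(k+1) tridiagonal 0/1 matrix indexed by the heights
   0..k.  It is the transfer matrix of bounded Motzkin paths, so that
   M_N^(k) = (A^N)_(0,0), and the Hankel matrix (M_(n+i+j))_(i,j<k) equals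
   V^T A^n V where V is the Krylov matrix with columns A^j e_0, j < k.  As
   A^j e_0 is supported on the heights <= j with a 1 at height j, V = J U
   with J the embedding of the first k coordinates and U unitriangular, so
   the Hankel determinant is det (J^T A^n J).
   When k = 1 (mod 3), the vector z = (1,-1,0,1,-1,0,...,1,-1) lies in the
   kernel of A, which yields a factorisation A = A J K with K = [I | z'],
   z' the first k entries of z.  For a symmetric A this gives
   det (J^T A^(m+1) J) = det (J^T A J)^(m+1) det (K K^T)^m (a general
   "compression" lemma).  Finally J^T A J is the k x k tridiagonal matrix,
   of determinant (-1)^((k-1)/3), and K K^T = 1 + z' z'^T has determinant
   1 + |z'|^2 = (2k+4)/3 by the matrix determinant lemma. *)

(* Enumeration of the words of length N over a finite alphabet, used to
   count tuples by recursion on their first letter. *)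
Section Words.
Variable T : finType.

Fixpoint words (N : nat) : seq (seq T) :=
  if N is N'.+1 then [seq s :: w | s <- enum T, w <- words N'] else [:: [::]].

Lemma mem_words N w : (w \in words N) = (size w == N).
Proof.
elim: N w => [|N IH] [|s w] //=.
  by apply/allpairsP => -[[x y] /= [_ _]].
rewrite eqSS -IH; apply/allpairsP/idP => [[[x y] /= [_ hy [_ ->]]] //|hw].
by exists (s, w); rewrite /= mem_enum.
Qed.

Lemma uniq_words N : uniq (words N).
Proof.
elim: N => //= N IH; rewrite allpairs_uniq ?enum_uniq //.
by move=> [x u] [y v] _ _ /= [-> ->].
Qed.

Lemma card_tuple_words (P : pred (seq T)) N :
  #|[set t : N.-tuple T | P t]| = count P (words N).
Proof.
rewrite cardsE cardE /enum_mem size_filter -enumT.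
rewrite (eq_count (a2 := preim val P)) // -count_map; apply/permP/uniq_perm.
- by rewrite (map_inj_uniq val_inj) enum_uniq.
- exact: uniq_words.
move=> w; rewrite mem_words; apply/mapP/idP => [[t _ ->]|hw].
  by rewrite size_tuple.
by exists (Tuple hw); rewrite ?mem_enum.
Qed.

Lemma count_words_cons (P : pred (seq T)) N :
  count P (words N.+1) = (\sum_(s : T) count (fun w => P (s :: w)) (words N))%N.
Proof.
rewrite -big_enum /=; elim: (enum T) => [|s e IH]; first by rewrite big_nil.
by rewrite allpairs_cons count_cat count_map big_cons IH.
Qed.
End Words.

(* Walks with steps -1, 0, +1 from height a to height b, all of whose
   heights after the start stay in [0, k]. *)
Definition in_band (k : nat) (y : int) : bool := (0 <= y) && (y <= k%:Z).

Definition bounded_walk (k : nat) (a b : int) (ss : seq 'I_3) : bool :=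
  (foldl (fun y s => y + step_dy s) a ss == b) &&
  all (in_band k) (scanl (fun y s => y + step_dy s) a ss).

Lemma bounded_walk_cons k a b s ss :
  bounded_walk k a b (s :: ss) =
  in_band k (a + step_dy s) && bounded_walk k (a + step_dy s) b ss.
Proof. by rewrite /bounded_walk /= andbCA. Qed.

Definition walks (k N : nat) (a b : int) : nat :=
  count (bounded_walk k a b) (words 'I_3 N).

Lemma walks_first_step k N a b s :
  count (fun w => bounded_walk k a b (s :: w)) (words 'I_3 N) =
  (in_band k (a + step_dy s) * walks k N (a + step_dy s) b)%N.
Proof.
rewrite /walks; under eq_count => w do rewrite bounded_walk_cons.
by case: in_band; rewrite ?mul1n ?mul0n //= count_pred0.
Qed.

Lemma walks_S k N a b :
  walks k N.+1 a b = (in_band k (a - 1) * walks k N (a - 1) b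
    + in_band k a * walks k N a b + in_band k (a + 1) * walks k N (a + 1) b)%N.
Proof.
rewrite {1}/walks count_words_cons !big_ord_recl big_ord0 !walks_first_step.
by rewrite /step_dy /= subrr addr0 addn0 addnA.
Qed.

Definition tridiag (m : nat) : 'M[int]_m :=
  \matrix_(i, j) (((i <= j.+1) && (j <= i.+1))%N)%:R.

Lemma tridiag_tr m : (tridiag m)^T = tridiag m.
Proof. by apply/matrixP => i j; rewrite !mxE andbC. Qed.

Lemma sum_nat_delta n (G : nat -> int) x :
  \sum_(c < n) ((c : nat) == x)%:R * G c = if (x < n)%N then G x else 0.
Proof.
rewrite -(@big_ord1_eq _ _ +%R G x n) [RHS]big_mkcond; apply: eq_bigr => c _.
by case: (_ == x); rewrite ?mul1r ?mul0r.
Qed.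

Lemma sum_tridiag_row n (a : 'I_n) (G : nat -> int) :
  \sum_(c < n) tridiag n a c * G c =
  (if (0 < a)%N then G a.-1 else 0) + G a + (if (a.+1 < n)%N then G a.+1 else 0).
Proof.
have band_split (c : nat) : (((a <= c.+1) && (c <= a.+1))%N)%:R =
    (c.+1 == a)%:R + (c == a)%:R + (c == a.+1)%:R :> int.
  by case: leqP; case: leqP; case: eqP; case: eqP; case: eqP => //=; lia.
under eq_bigr => c _ do rewrite mxE band_split !mulrDl.
rewrite !big_split /= !sum_nat_delta ltn_ord; congr (_ + _ + _).
case: (nat_of_ord a) (ltn_ord a) => [|a'] ha /=.
  by rewrite big1 // => c _; rewrite mul0r.
by under eq_bigr => c _ do rewrite eqSS; rewrite sum_nat_delta ltnW.
Qed.

Lemma walks_tridiag k N (i j : 'I_k.+1) :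
  (walks k N i j)%:R = ((tridiag k.+1) ^+ N) i j :> int.
Proof.
elim: N i => [|N IH] i.
  rewrite /walks /= /bounded_walk /= expr0 mxE addn0 andbT -(inj_eq val_inj).
  by rewrite eqz_nat.
rewrite walks_S exprS -mulmxE mxE.
under eq_bigr => c _ do rewrite -IH.
rewrite (sum_tridiag_row _ i (fun c : nat => (walks k N c j)%:R)) !natrD !natrM.
have in_band_nat (c : nat) : in_band k c = (c <= k)%N by rewrite /in_band lez_nat.
congr (_ + _ + _).
- case: (posnP i) => [-> | i_gt0]; first by rewrite mul0r.
  have -> : (i : int) - 1 = i.-1 by rewrite -[in LHS](prednK i_gt0) -addn1 PoszD addrK.
  by rewrite in_band_nat (leq_trans (leq_pred i)) ?mul1r // -ltnS.
- by rewrite in_band_nat -ltnS ltn_ord mul1r.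
- by rewrite -PoszD addn1 in_band_nat ltnS; case: leqP; rewrite ?mul1r ?mul0r.
Qed.

Lemma motzkin_tridiag k N :
  (motzkin_bounded k N)%:R = ((tridiag k.+1) ^+ N) ord0 ord0 :> int.
Proof.
by rewrite /motzkin_bounded card_tuple_words -(walks_tridiag k N ord0 ord0).
Qed.

Lemma det_tridiag_rec m :
  \det (tridiag m.+2) = \det (tridiag m.+1) - \det (tridiag m).
Proof.
rewrite (expand_det_row _ ord_max) !big_ord_recr /= big1 => [|j _]; last first.
  rewrite !mxE /=.
  have /negbTE -> : ~~ (m.+1 <= j.+1)%N by have := ltn_ord j; lia.
  by rewrite mul0r.
rewrite !mxE /= !leqnn ltnW // leqnSn /= !mul1r add0r.
have -> : cofactor (tridiag m.+2) ord_max ord_max = \det (tridiag m.+1).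
  rewrite /cofactor /= addnn -signr_odd odd_double expr0 mul1r.
  by congr (\det _); apply/matrixP => i j; rewrite !mxE !lift_max.
have -> : cofactor (tridiag m.+2) ord_max (widen_ord (leqnSn m.+1) ord_max)
   = - \det (tridiag m).
  rewrite /cofactor /= addSn addnn -signr_odd /= odd_double /= expr1 mulN1r.
  congr (- _).
  rewrite (expand_det_col _ ord_max) big_ord_recr /= big1 => [|i _]; last first.
    rewrite !mxE /= /bump /=.
    by rewrite (_ : _ && _ = false) ?mul0r //; have := ltn_ord i; lia.
  rewrite !mxE /= /bump /= (_ : _ && _ = true) ?mul1r ?add0r; last by lia.
  rewrite /cofactor /= addnn -signr_odd odd_double expr0 mul1r.
  congr (\det _); apply/matrixP => i j; rewrite !mxE /= /bump /=.
  by have := ltn_ord i; have := ltn_ord j; move=> hj hi; congr (_ %:R); lia.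
by rewrite addrC.
Qed.

Lemma det_tridiag q : \det (tridiag (q * 3 + 1)) = (-1) ^+ q.
Proof.
elim: q => [|q IH]; first by rewrite mul0n add0n det_mx11 mxE.
have -> : (q.+1 * 3 + 1 = (q * 3 + 1).+3)%N by lia.
by rewrite !det_tridiag_rec IH exprS; ring.
Qed.

(* The periodic sequence 1, -1, 0, 1, -1, 0, ...; it is annihilated by
   the tridiagonal band, so it gives a kernel vector when k = 1 (mod 3). *)
Definition period3 (x : nat) : int :=
  match (x %% 3)%N with 0 => 1 | 1 => -1 | _ => 0 end.

Lemma period3_shift q c : period3 (q * 3 + c) = period3 c.
Proof. by rewrite /period3 modnMDl. Qed.

Lemma period3_window x : period3 x + period3 x.+1 + period3 x.+2 = 0.
Proof.
rewrite [x](divn_eq x 3) -!addnS !period3_shift.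
by case: (x %% 3)%N (ltn_pmod x (isT : (0 < 3)%N)) => [|[|[|r]]].
Qed.

(* For k = 1 (mod 3), (period3 c)_(c <= k) is in the kernel of tridiag (k+1);
   the truncated window at the last row is still a full one since
   period3 (k+1) = 0. *)
Lemma tridiag_kernel k (hk : (k %% 3 = 1)%N) (a : 'I_k.+1) :
  \sum_(c < k.+1) tridiag k.+1 a c * period3 c = 0.
Proof.
rewrite (sum_tridiag_row _ a period3).
have -> : (if (a.+1 < k.+1)%N then period3 a.+1 else 0) = period3 a.+1.
  case: ltnP => // a_ge; have -> : (a : nat) = k by have := ltn_ord a; lia.
  by rewrite [k](divn_eq k 3) hk -addnS period3_shift.
case: (posnP a) => [-> | a_gt0] /=; first by rewrite add0r.
by have := period3_window a.-1; rewrite prednK.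
Qed.

(* Compression of powers of a symmetric matrix A along J, given a
   factorisation A = A J K: then A^(m+1) = A^(m+1) J K and A = K^T J^T A, so
   the compressed powers J^T A^m J satisfy a one-step recursion. *)
Section Compression.
Variables (R : comRingType) (p q : nat).
Variables (A : 'M[R]_p) (J : 'M[R]_(p, q)) (K : 'M[R]_(q, p)).
Hypothesis A_sym : A^T = A.
Hypothesis A_factor : A *m J *m K = A.

Lemma compressed_pow_rec m :
  J^T *m A ^+ m.+2 *m J =
  (J^T *m A ^+ m.+1 *m J) *m (K *m K^T) *m (J^T *m A *m J).
Proof.
have A_pow_factor : A ^+ m.+1 = A ^+ m.+1 *m J *m K.
  by rewrite exprSr -mulmxE -!mulmxA (mulmxA A) A_factor.
have A_cofactor : A = K^T *m J^T *m A.
  by rewrite -trmx_mul -[in RHS]A_sym -trmx_mul mulmxA A_factor A_sym.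
by rewrite exprSr -mulmxE {1}A_pow_factor [X in _ *m K *m X]A_cofactor !mulmxA.
Qed.

Lemma det_compressed_pow m :
  \det (J^T *m A ^+ m.+1 *m J) =
  \det (J^T *m A *m J) ^+ m.+1 * \det (K *m K^T) ^+ m.
Proof.
elim: m => [|m IH]; first by rewrite expr1 mulr1.
by rewrite compressed_pow_rec !det_mulmx IH !exprS; ring.
Qed.
End Compression.

Lemma det_rank1_update (R : comRingType) n (u v : 'cV[R]_n) :
  \det (1%:M + u *m v^T) = 1 + (v^T *m u) 0 0.
Proof.
pose L : 'M[R]_(n + 1) := block_mx 1%:M 0 v^T 1%:M.
pose M : 'M[R]_(n + 1) := block_mx (1%:M + u *m v^T) u 0 1%:M.
pose N : 'M[R]_(n + 1) := block_mx 1%:M 0 (- v^T) 1%:M.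
have LMN : L *m M *m N = block_mx 1%:M u 0 (1%:M + v^T *m u).
  rewrite /L /M /N !mulmx_block !mul1mx !mul0mx !mulmx0 !mulmx1 !addr0 !add0r.
  rewrite !mulmxN !mulmxDr !mulmxDl !mulmx1 !mulmxA !mul1mx.
  by rewrite addrK [v^T *m u + _]addrC opprD addrA addrK subrr.
have := congr1 determinant LMN.
rewrite !det_mulmx det_lblock det_ublock det_lblock det_ublock !det1 !mulr1 !mul1r.
by move->; rewrite det_mx11 !mxE eqxx mulr1n.
Qed.

Definition widen_last (k : nat) : 'I_k -> 'I_k.+1 := widen_ord (leqnSn k).

Definition embed (k : nat) : 'M[int]_(k.+1, k) := colsub (widen_last k) 1%:M.

Lemma mulmx_embed k m (M : 'M[int]_(m, k.+1)) :
  M *m embed k = colsub (widen_last k) M.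
Proof. by rewrite mulmx_colsub mulmx1. Qed.

Lemma tr_embed_mulmx k m (M : 'M[int]_(k.+1, m)) :
  (embed k)^T *m M = rowsub (widen_last k) M.
Proof. by rewrite trmx_mxsub trmx1 mul_rowsub_mx mul1mx. Qed.

Lemma eq_widen_last k (r s : 'I_k) :
  (widen_last k r == widen_last k s) = (r == s).
Proof. by apply/eqP/eqP => [/(congr1 val) /= /val_inj|->]. Qed.

Lemma last_neq_widen k (r : 'I_k) : (ord_max == widen_last k r) = false.
Proof. by apply/negbTE; rewrite -(inj_eq val_inj) /= neq_ltn ltn_ord orbT. Qed.

Lemma embed_rowsub k m (V : 'M[int]_(k.+1, m)) :
  (forall j, V ord_max j = 0) -> embed k *m rowsub (widen_last k) V = V.
Proof.
move=> V_last; apply/matrixP => a j; rewrite !mxE.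
case: (unliftP ord_max a) => [b ->|->].
  have -> : lift ord_max b = widen_last k b by apply/val_inj/lift_max.
  rewrite (bigD1 b) //= !mxE eqxx mul1r big1 ?addr0 // => r r_b.
  by rewrite !mxE eq_widen_last eq_sym (negbTE r_b) mul0r.
by rewrite V_last big1 // => r _; rewrite !mxE last_neq_widen mul0r.
Qed.

Lemma compress_tridiag k : (embed k)^T *m tridiag k.+1 *m embed k = tridiag k.
Proof. by rewrite tr_embed_mulmx mulmx_embed; apply/matrixP => i j; rewrite !mxE. Qed.

Definition kernel_head (k : nat) : 'cV[int]_k := \col_r period3 r.

Definition deflate (k : nat) : 'M[int]_(k, k.+1) :=
  \matrix_(r, c) ((c == widen_last k r)%:R + (c == ord_max)%:R * period3 r).

Lemma sum_mul_delta n (F : 'I_n -> int) (c : 'I_n) :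
  \sum_(b < n) F b * (b == c)%:R = F c.
Proof.
rewrite (bigD1 c) //= eqxx mulr1 big1 ?addr0 // => b /negbTE->.
by rewrite mulr0.
Qed.

(* The factorisation A = A J K: the kernel relation expresses the last
   column of A through the first k columns. *)
Lemma tridiag_deflate k (hk : (k %% 3 = 1)%N) :
  tridiag k.+1 *m embed k *m deflate k = tridiag k.+1.
Proof.
set A := tridiag k.+1.
have last_col (a : 'I_k.+1) :
    \sum_(r < k) A a (widen_last k r) * period3 r = A a ord_max.
  have := tridiag_kernel k hk a; rewrite big_ord_recr /=.
  have -> : period3 k = -1 by rewrite [k](divn_eq k 3) hk period3_shift.
  by rewrite mulrN1 => /eqP; rewrite subr_eq0 => /eqP.
clearbody A; rewrite mulmx_embed; apply/matrixP => a b; rewrite !mxE.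
under eq_bigr => r _ do rewrite !mxE mulrDr mulrCA.
rewrite big_split /= -mulr_sumr last_col.
have := sum_mul_delta _ (A a) b; rewrite big_ord_recr /= => <-.
congr (_ + _); first by apply: eq_bigr => r _; rewrite eq_sym.
by rewrite mulrC eq_sym.
Qed.

Lemma deflate_gram k :
  deflate k *m (deflate k)^T = 1%:M + kernel_head k *m (kernel_head k)^T.
Proof.
apply/matrixP => r s; rewrite !mxE big_ord_recr /= big_ord1 !mxE eqxx.
rewrite !last_neq_widen !add0r !mul1r; congr (_ + _).
transitivity (\sum_(t < k) (t == r)%:R * (t == s)%:R : int).
  apply: eq_bigr => t _; rewrite !mxE -/(widen_last k t).
  by rewrite !(eq_sym _ ord_max) !last_neq_widen !mul0r !addr0 !eq_widen_last.
by rewrite sum_mul_delta eq_sym.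
Qed.

Lemma kernel_head_norm q :
  ((kernel_head (q * 3 + 1))^T *m kernel_head (q * 3 + 1)) 0 0 = (q * 2 + 1)%:R.
Proof.
rewrite mxE; under eq_bigr => r _ do rewrite !mxE.
elim: q => [|q IH]; first by rewrite big_ord1.
have -> : (q.+1 * 3 + 1 = (q * 3 + 1).+3)%N by lia.
rewrite !big_ord_recr /= IH -!addnS !period3_shift.
have -> : (q.+1 * 2 + 1 = (q * 2 + 1) + 2)%N by lia.
have [-> -> ->] : [/\ period3 1 = -1, period3 2 = 0 & period3 3 = 1] by [].
by rewrite !natrD; ring.
Qed.

Definition krylov (k : nat) : 'M[int]_(k.+1, k) :=
  \matrix_(r, j) ((tridiag k.+1) ^+ j) r ord0.

Lemma tridiag_pow_below k j (r : 'I_k.+1) :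
  (j < r)%N -> ((tridiag k.+1) ^+ j) r ord0 = 0.
Proof.
elim: j r => [|j IH] r hr; first by rewrite expr0 mxE; case: r hr => [[|r] ?].
rewrite exprS -mulmxE mxE big1 // => c _.
case: (ltnP j c) => h; first by rewrite IH // mulr0.
by rewrite mxE (_ : _ && _ = false) ?mul0r //; lia.
Qed.

Lemma tridiag_pow_diag k (r : 'I_k.+1) : ((tridiag k.+1) ^+ r) r ord0 = 1.
Proof.
case: r => j hj /=; elim: j hj => [|j IH] hj; first by rewrite expr0 mxE.
have hj' : (j < k.+1)%N by apply: ltnW.
rewrite exprS -mulmxE mxE (bigD1 (Ordinal hj')) //= IH mulr1 mxE /=.
rewrite ltnSn (leqW (leqnSn j)) big1 ?addr0 // => c hc.
have hc' : (c : nat) != j by apply: contra hc => /eqP e; apply/eqP/val_inj.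
case: (ltnP j c) => h; first by rewrite tridiag_pow_below // mulr0.
by rewrite mxE /= (_ : _ && _ = false) ?mul0r //; lia.
Qed.

Lemma det_krylov_head k : \det (rowsub (widen_last k) (krylov k)) = 1.
Proof.
rewrite -det_tr det_trig; last first.
  apply/forallP => i; apply/forallP => j; apply/implyP => lt_ij.
  by rewrite !mxE tridiag_pow_below.
by rewrite big1 // => i _; rewrite !mxE; exact: tridiag_pow_diag k (widen_last k i).
Qed.

Lemma tridiag_pow_tr k j : ((tridiag k.+1) ^+ j)^T = (tridiag k.+1) ^+ j.
Proof.
elim: j => [|j IH]; first by rewrite expr0 trmx1.
by rewrite exprS -mulmxE trmx_mul IH tridiag_tr mulmxE -exprSr -exprS.
Qed.

Lemma hankel_krylov k n :
  \matrix_(i < k, j < k) ((tridiag k.+1) ^+ (n + i + j)) ord0 ord0 =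
  (krylov k)^T *m (tridiag k.+1) ^+ n *m krylov k.
Proof.
apply/matrixP => i j; rewrite [LHS]mxE (addnC n) !exprD -!mulmxE !mxE.
apply: eq_bigr => s _; rewrite !mxE; congr (_ * _).
by apply: eq_bigr => r _; rewrite -[in LHS]tridiag_pow_tr !mxE.
Qed.

Theorem theorem54 (n k : nat) (hn : (0 < n)%N) (hk : (0 < k)%N)
  (hk3 : k = 1 %[mod 3]) :
  \det (\matrix_(i < k, j < k) ((motzkin_bounded k (n + i + j))%:R : int))
  = (-1) ^+ (n * ((k + 1) %/ 3)) * (((2 * k + 4) %/ 3)%:R) ^+ (n - 1).
Proof.
have [m -> {hn}] : exists m, n = m.+1 by exists n.-1; rewrite prednK.
have k_mod3 : (k %% 3 = 1)%N by [].
pose U := rowsub (widen_last k) (krylov k).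
have krylov_factor : krylov k = embed k *m U.
  by rewrite embed_rowsub // => j; rewrite mxE tridiag_pow_below.
have -> : \matrix_(i < k, j < k) ((motzkin_bounded k (m.+1 + i + j))%:R : int)
    = U^T *m ((embed k)^T *m (tridiag k.+1) ^+ m.+1 *m embed k) *m U.
  transitivity ((krylov k)^T *m (tridiag k.+1) ^+ m.+1 *m krylov k).
    by rewrite -hankel_krylov; apply/matrixP => i j; rewrite !mxE motzkin_tridiag.
  by rewrite krylov_factor trmx_mul !mulmxA.
rewrite !det_mulmx det_tr det_krylov_head mul1r mulr1.
rewrite (det_compressed_pow _ _ _ _ _ (deflate k) (tridiag_tr _)
          (tridiag_deflate k k_mod3)).
rewrite compress_tridiag deflate_gram det_rank1_update.
have [q ->] : exists q, k = (q * 3 + 1)%N by exists (k %/ 3)%N; rewrite {1}(divn_eq k 3) k_mod3.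
rewrite kernel_head_norm det_tridiag.
have -> : ((q * 3 + 1 + 1) %/ 3 = q)%N by lia.
have -> : ((2 * (q * 3 + 1) + 4) %/ 3 = 1 + (q * 2 + 1))%N by lia.
by rewrite subSS subn0 -exprM mulnC [in RHS]natrD.
Qed.
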